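(* Let $\mathcal{F}$ be a finite set of graphs, let $T\ge0$, and let $G,H$ be graphs on $n$ vertices. Then $$\big\|\phi^{(T)}_{\mathsf{WLOA},\mathcal{F}}(G)-\phi^{(T)}_{\mathsf{WLOA},\mathcal{F}}(H)\big\|\ge\big\|\phi^{(T)}_{\mathsf{WLOA}}(G)-\phi^{(T)}_{\mathsf{WLOA}}(H)\big\|.$$
   Context: Graphs are finite, simple, undirected, unlabeled. $1$-WL: $C^1_0$ constant, $C^1_t(v)=\mathsf{RELABEL}(C^1_{t-1}(v),\{\!\{C^1_{t-1}(u):u\in N(v)\}\!\})$ with a fixed injective $\mathsf{RELABEL}$ shared by all graphs. $1$-WL$_{\mathcal{F}}$: same update with initial colour $(\ell_F(v))_{F\in\mathcal{F}}$, $\ell_F(v)=1$ if $v$ lies in some vertex set $X$ with induced subgraph $G[X]$ isomorphic to $F$, else $0$. Let $\Sigma_t$ (resp. $\Sigma^{\mathcal{F}}_t$) be the colours occurring at round $t$ in $G$ or $H$, and $\phi_t(G)_c$ (resp. $\phi_{\mathcal{F},t}(G)_c$) the number of vertices of $G$ of colour $c$ at round $t$. $\phi^{(T)}_{\mathsf{WLOA}}(G)$ is the $0/1$ vector with one coordinate for each $(t,c,j)$, $t\in\{0,\dots,T\}$, $c\in\Sigma_t$, $j\in\{1,\dots,n\}$, equal to $1$ iff $\phi_t(G)_c\ge j$; $\phi^{(T)}_{\mathsf{WLOA},\mathcal{F}}$ is defined likewise from the $1$-WL$_{\mathcal{F}}$ counts. $\|\cdot\|$ is the Euclidean norm. *)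

From HB Require Import structures.
From mathcomp Require Import all_boot all_order all_algebra.
Set Implicit Arguments. Unset Strict Implicit. Unset Printing Implicit Defensive.
Import Order.TTheory GRing.Theory Num.Theory.

Record graph := Graph {
  gsize : nat;
  gadj : rel 'I_gsize;
  gsym : symmetric gadj;
  girr : irreflexive gadj }.

(* ell_F(v): v lies in some vertex set X with G[X] isomorphic to F,
   i.e. there is an injective map f : V(F) -> V(G) with v in its image
   such that f is an isomorphism from F onto the induced subgraph G[f(V(F))]. *)
Definition ell (n : nat) (adj : rel 'I_n) (F : graph) (v : 'I_n) : bool :=
  [exists f : {ffun 'I_(gsize F) -> 'I_n},
     [&& injectiveb f, v \in codom f &
        [forall i, forall j, gadj i j == adj (f i) (f j)]]].

(* Colour refinement with initial colouring init and relabelling function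
   relabel (the multiset of neighbour colours is passed as a sequence;
   relabel is required to be injective on (colour, multiset) pairs). *)
Fixpoint wl (C : Type) (relabel : C -> seq C -> C) (n : nat)
    (adj : rel 'I_n) (init : 'I_n -> C) (t : nat) (v : 'I_n) : C :=
  match t with
  | 0 => init v
  | t'.+1 => relabel (wl relabel adj init t' v)
                     [seq wl relabel adj init t' u | u <- enum 'I_n & adj v u]
  end.

Definition relabel_injective (C : eqType) (relabel : C -> seq C -> C) :=
  forall c c' s s', (relabel c s == relabel c' s') = (c == c') && perm_eq s s'.

Definition wlF (C : Type) (emb : seq bool -> C) (relabel : C -> seq C -> C)
    (Fs : seq graph) (n : nat) (adj : rel 'I_n) (t : nat) (v : 'I_n) : C :=
  wl relabel adj (fun v => emb [seq ell adj F v | F <- Fs]) t v.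

Definition wl1 (C : Type) (c0 : C) (relabel : C -> seq C -> C)
    (n : nat) (adj : rel 'I_n) (t : nat) (v : 'I_n) : C :=
  wl relabel adj (fun _ => c0) t v.

Definition Sigma (C : eqType) (n : nat) (colG colH : nat -> 'I_n -> C) (t : nat)
  : seq C :=
  undup ([seq colG t v | v <- enum 'I_n] ++ [seq colH t v | v <- enum 'I_n]).

Definition phi_count (C : eqType) (n : nat) (col : nat -> 'I_n -> C) (t : nat) (c : C)
  : nat := #|[set v | col t v == c]|.

Definition wloa_index (C : eqType) (n : nat) (colG colH : nat -> 'I_n -> C) (T : nat)
  : seq (nat * C * nat) :=
  flatten [seq [seq (t, c, j) | c <- Sigma colG colH t, j <- iota 1 n] | t <- iota 0 T.+1].

Definition wloa (R : pzSemiRingType) (C : eqType) (n : nat) (col : nat -> 'I_n -> C)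
    (x : nat * C * nat) : R :=
  ((x.2 <= phi_count col x.1.1 x.1.2)%N)%:R.

Definition wloa_dist (R : rcfType) (C : eqType) (n : nat) (colG colH : nat -> 'I_n -> C)
    (T : nat) : R :=
  Num.sqrt (\sum_(x <- wloa_index colG colH T)
              (wloa R colG x - wloa R colH x) ^+ 2)%R.

From mathcomp Require Import all_boot all_order all_algebra.
From mathcomp Require Import zify.
Import Order.TTheory GRing.Theory Num.Theory.

Set Implicit Arguments.
Unset Strict Implicit.
Unset Printing Implicit Defensive.

(* The squared WLOA distance is the sum, over rounds t and colours c, of
   |phi_t(G)_c - phi_t(H)_c|, since exactly that many thresholds j separate
   the two counts.  By induction on the rounds, the 1-WL colour of a vertex
   (of G or of H) is a function g of its 1-WL_F colour: the constant initial
   colouring is coarser than any other, and the injective relabelling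
   preserves coarseness.  So every 1-WL class is a disjoint union of 1-WL_F
   classes, and by the triangle inequality merging classes can only decrease
   the sum of count differences. *)

Section Refinement.
Variables (X : finType) (A B : eqType).

Definition refines (f : X -> A) (g : X -> B) := forall x y, f x = f y -> g x = g y.

Lemma refines_factor (f : X -> A) (g : X -> B) (b0 : B) :
  refines f g -> exists h : A -> B, forall x, g x = h (f x).
Proof.
move=> fg; exists (fun a => if [pick x | f x == a] is Some y then g y else b0) => x.
by case: pickP => [y /eqP/fg //|/(_ x)]; rewrite eqxx.
Qed.

Lemma perm_map_refines (f : X -> A) (g : X -> B) (s s' : seq X) :
  refines f g -> perm_eq (map f s) (map f s') -> perm_eq (map g s) (map g s').
Proof.
move=> fg /permP count_f; apply/permP => p; rewrite !count_map.
pose q a := [exists x, (f x == a) && p (g x)].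
have qfE y : q (f y) = p (g y).
  by apply/existsP/idP => [[x /andP[/eqP/fg <-]]|pgy] //; exists y; rewrite eqxx.
have count_qf r : count (preim f q) r = count (preim g p) r.
  by apply: eq_count => y; rewrite /= qfE.
by rewrite -!count_qf -!(count_map f q) count_f.
Qed.

End Refinement.

Section ColourRefinement.
Variables (C : eqType) (relabel : C -> seq C -> C).
Hypothesis relabel_inj : relabel_injective relabel.
Variables (I : finType) (n : nat) (adj : I -> rel 'I_n).

Definition wl_family (init : I -> 'I_n -> C) (t : nat) (x : I * 'I_n) : C :=
  wl relabel (adj x.1) (init x.1) t x.2.

Definition neighbours (x : I * 'I_n) : seq (I * 'I_n) :=
  [seq (x.1, u) | u <- enum 'I_n & adj x.1 x.2 u].

Lemma wl_familyS (init : I -> 'I_n -> C) (t : nat) (x : I * 'I_n) :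
  wl_family init t.+1 x
  = relabel (wl_family init t x) (map (wl_family init t) (neighbours x)).
Proof. by rewrite /wl_family /= -map_comp. Qed.

Lemma wl_family_refines (init init' : I -> 'I_n -> C) (t : nat) :
  refines (fun x : (I * 'I_n)%type => init x.1 x.2) (fun x => init' x.1 x.2) ->
  refines (wl_family init t) (wl_family init' t).
Proof.
move=> init_ref; elim: t => [//|t IH] x y; rewrite !wl_familyS => /eqP.
rewrite relabel_inj => /andP[/eqP same_col same_nbrs].
apply/eqP; rewrite relabel_inj (IH _ _ same_col) eqxx.
exact: perm_map_refines IH same_nbrs.
Qed.

End ColourRefinement.

Lemma leq_dist_sum (I : Type) (r : seq I) (x y : I -> nat) :
  `|\sum_(i <- r) x i - \sum_(i <- r) y i| <= \sum_(i <- r) `|x i - y i|.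
Proof. by elim: r => [|i r IH]; rewrite ?big_nil // !big_cons; lia. Qed.

Lemma card_preim_comp (A B : eqType) n (f : 'I_n -> B) (g : B -> A) (S : seq B) (c : A) :
  uniq S -> (forall v, f v \in S) ->
  #|[set v | g (f v) == c]| = \sum_(d <- S) (g d == c) * #|[set v | f v == d]|.
Proof.
move=> S_uniq fS.
have cardE (P : pred 'I_n) : #|[set v | P v]| = \sum_v (P v : nat).
  by rewrite cardsE -sum1_card big_mkcond.
under eq_bigr => d _ do rewrite cardE big_distrr /=.
rewrite cardE exchange_big /=; apply: eq_bigr => v _.
rewrite (bigD1_seq (f v)) //= eqxx muln1 big1_seq ?addn0 // => d /andP[fvd _].
by rewrite [f v == d]eq_sym (negbTE fvd) muln0.
Qed.

Lemma sum_eq_uniq_le1 (C : eqType) (s : seq C) (x : C) :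
  uniq s -> \sum_(c <- s) (x == c : nat) <= 1.
Proof.
move=> s_uniq; have -> : \sum_(c <- s) (x == c : nat) = count_mem x s.
  by elim: s {s_uniq} => [|c s IH]; rewrite ?big_nil ?big_cons //= IH eq_sym.
by rewrite count_uniq_mem // leq_b1.
Qed.

Definition count_dist (C : eqType) n (colG colH : nat -> 'I_n -> C) (t : nat) : nat :=
  \sum_(c <- Sigma colG colH t) `|phi_count colG t c - phi_count colH t c|.

Lemma count_dist_comp (A B : eqType) n (colG colH : nat -> 'I_n -> A)
    (finG finH : nat -> 'I_n -> B) (g : B -> A) (t : nat) :
  (forall v, colG t v = g (finG t v)) -> (forall v, colH t v = g (finH t v)) ->
  count_dist colG colH t <= count_dist finG finH t.
Proof.
move=> colGE colHE; set S := Sigma finG finH t.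
have S_uniq : uniq S := undup_uniq _.
have finGS v : finG t v \in S by rewrite mem_undup mem_cat map_f ?mem_enum.
have finHS v : finH t v \in S by rewrite mem_undup mem_cat map_f ?mem_enum ?orbT.
have phiE (col : nat -> 'I_n -> A) (fin : nat -> 'I_n -> B) c :
    (forall v, col t v = g (fin t v)) -> (forall v, fin t v \in S) ->
    phi_count col t c = \sum_(d <- S) (g d == c) * phi_count fin t d.
  move=> colE finS; rewrite /phi_count -(card_preim_comp g c S_uniq finS).
  by apply: eq_card => v; rewrite !inE colE.
pose dist_fin d := `|phi_count finG t d - phi_count finH t d|.
apply: (@leq_trans (\sum_(c <- Sigma colG colH t) \sum_(d <- S) (g d == c) * dist_fin d)).
  apply: leq_sum => c _; rewrite (phiE colG finG) // (phiE colH finH) //.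
  apply: leq_trans (leq_dist_sum _ _ _) _; apply: leq_sum => d _.
  by case: (g d == c); rewrite ?mul1n ?mul0n.
rewrite exchange_big /=; apply: leq_sum => d _.
by rewrite -big_distrl /= -[X in _ <= X]mul1n leq_mul // sum_eq_uniq_le1 ?undup_uniq.
Qed.

Lemma sum_iota_leq_neq (a b n : nat) :
  \sum_(j <- iota 1 n) ((j <= a) != (j <= b) : nat) = `|minn a n - minn b n|.
Proof.
elim: n => [|n IH]; first by rewrite big_nil !minn0.
rewrite -[n.+1]addn1 iotaD big_cat /= big_cons big_nil IH.
by case: (leqP (1 + n) a) => ?; case: (leqP (1 + n) b) => ? /=; lia.
Qed.

Lemma sqr_subr_bool (R : pzRingType) (p q : bool) :
  ((p%:R - q%:R) ^+ 2 = (p != q)%:R :> R)%R.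
Proof. by case: p; case: q; rewrite ?subrr ?subr0 ?sub0r ?sqrrN ?expr1n ?expr0n. Qed.

Lemma sum_sqr_wloa_sub (R : pzRingType) (C : eqType) n (colG colH : nat -> 'I_n -> C)
    (T : nat) :
  (\sum_(x <- wloa_index colG colH T) (wloa R colG x - wloa R colH x) ^+ 2)%R
  = (\sum_(t <- iota 0 T.+1) count_dist colG colH t)%:R%R.
Proof.
rewrite /wloa_index big_flatten big_map natr_sum; apply: eq_bigr => t _.
rewrite big_allpairs_dep natr_sum; apply: eq_bigr => c _.
have phi_le_n (col : nat -> 'I_n -> C) : phi_count col t c <= n.
  by rewrite -[n in _ <= n]card_ord max_card.
rewrite -(minn_idPl (phi_le_n colG)) -(minn_idPl (phi_le_n colH)).
by rewrite -sum_iota_leq_neq natr_sum; apply: eq_bigr => j _; rewrite sqr_subr_bool.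
Qed.

Theorem proposition16
  (R : rcfType) (C : eqType) (c0 : C) (emb : seq bool -> C)
  (relabel : C -> seq C -> C)
  (emb_inj : injective emb) (relabel_inj : relabel_injective relabel)
  (Fs : seq graph) (T n : nat) (adjG adjH : rel 'I_n)
  (symG : symmetric adjG) (irrG : irreflexive adjG)
  (symH : symmetric adjH) (irrH : irreflexive adjH) :
  (wloa_dist R (wl1 c0 relabel adjG) (wl1 c0 relabel adjH) T
    <= wloa_dist R (wlF emb relabel Fs adjG) (wlF emb relabel Fs adjH) T)%R.
Proof.
rewrite /wloa_dist !sum_sqr_wloa_sub ler_sqrt ?ler0n // ler_nat.
apply: leq_sum => t _.
pose adj b := if b then adjG else adjH.
pose initF b v := emb [seq ell (adj b) F v | F <- Fs].
have const_coarser :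
  refines (fun x : (bool * 'I_n)%type => initF x.1 x.2) (fun _ => c0) by [].
have [g wl1E] := refines_factor c0
  (@wl_family_refines _ _ relabel_inj _ _ adj initF (fun _ _ => c0) t const_coarser).
by apply: (count_dist_comp (g := g)) => v; [exact: wl1E (true, v) | exact: wl1E (false, v)].
Qed.
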